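(* Let $q$ be a power of an odd prime $p$ with $q>5$, let $3\le h\le k$ be integers, let $$D_2=\Bigl\{(x_1,\ldots,x_k)\in\mathbb{F}_q^k\setminus\{0\}:\prod_{1\le i<j\le h}(x_i+x_j)=0\Bigr\},$$ and let $n=\#D_2$. Then the minimum nonzero weight of $\mathrm{C}_{D_2}$ is $n-q^{k-1}+1$, and it is attained exactly by the codewords associated with the hyperplanes $x_i+x_j=0$, $1\le i<j\le h$ (i.e. by the codewords $c_f$ with $f=\lambda(x_i+x_j)$, $\lambda\in\mathbb{F}_q^*$).
   Context: For a finite ordered set $D=\{P_1,\ldots,P_n\}\subseteq\mathbb{F}_q^k$, $\mathrm{C}_D=\{c_f=(f(P_1),\ldots,f(P_n)):f:\mathbb{F}_q^k\to\mathbb{F}_q\text{ linear}\}$; the codeword associated with a hyperplane through the origin is $c_f$ for a linear form $f$ defining it. Weights are Hamming weights. *)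

From HB Require Import structures.
From mathcomp Require Import all_boot all_order all_algebra all_field.
Set Implicit Arguments. Unset Strict Implicit. Unset Printing Implicit Defensive.
Import GRing.Theory.
Local Open Scope ring_scope.

(* Points of F^k are row vectors 'rV[F]_k; coordinate i (0-indexed) of x is x 0 i. *)

Definition D2 (F : finFieldType) (k h : nat) : {set 'rV[F]_k} :=
  [set x : 'rV[F]_k | (x != 0) &&
     ((\prod_(i < k | (i < h)%N)
        \prod_(j < k | ((i < j)%N && (j < h)%N)) (x 0 i + x 0 j)) == 0)].

(* The linear form f_a(x) = sum_i a_i x_i; every linear form F^k -> F is of this shape. *)
Definition lin_form (F : finFieldType) (k : nat) (a x : 'rV[F]_k) : F :=
  \sum_(i < k) a 0 i * x 0 i.

Definition codeword (F : finFieldType) (k : nat) (D : {set 'rV[F]_k}) (a : 'rV[F]_k)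
  : 'rV[F]_#|D| :=
  \row_(t < #|D|) lin_form a (nth 0 (enum D) t).

Definition wt (F : finFieldType) (n : nat) (c : 'rV[F]_n) : nat :=
  #|[set t : 'I_n | c 0 t != 0]|.

Definition e2 (F : finFieldType) (k : nat) (i j : 'I_k) : 'rV[F]_k :=
  delta_mx 0 i + delta_mx 0 j.

From mathcomp Require Import all_boot all_order all_algebra all_field.
From mathcomp Require Import mxabelem ring zify.
Set Implicit Arguments. Unset Strict Implicit. Unset Printing Implicit Defensive.
Import GRing.Theory.
Local Open Scope ring_scope.

(* For a nonzero form a with kernel H_a, which has q^(k-1) elements, the zeros
   of c_a are the points of D in H_a \ {0}, so
     wt c_a = n - q^(k-1) + 1 + #((H_a \ {0}) \ D),
   with equality in the bound iff H_a \ {0} is contained in D_2.  The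
   hyperplanes x_i + x_j = 0 (i < j < h) are.  Conversely, if H_a \ {0} lies in
   D_2 then no vector of H_a has all its pair sums x_i + x_j (i < j < h)
   nonzero.  Pushing the all-ones vector into H_a along a coordinate axis then
   shows that a is supported in the first h coordinates, with a constant value
   c such that a(1,...,1) = 2c; a support of size 1 would give c = 2c, and a
   support of size at least 3 is ruled out by a perturbation of the all-ones
   vector along three axes (this needs q > 3).  Finally every e_m lies in D_2
   (h >= 3), so c_a = 0 only for a = 0. *)

Section LinearForms.
Variables (F : finFieldType) (k : nat).
Implicit Types (a x : 'rV[F]_k) (D : {set 'rV[F]_k}).

Lemma lin_formC a x : lin_form a x = lin_form x a.
Proof. by apply: eq_bigr => i _; rewrite mulrC. Qed.

Lemma mulmx_tr_lin_form a x : x *m a^T = (lin_form a x)%:M.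
Proof.
apply/matrixP => i j; rewrite !ord1 !mxE eqxx mulr1n lin_formC.
by apply: eq_bigr => l _; rewrite mxE.
Qed.

Definition hyperplane a : {set 'rV[F]_k} := [set x | lin_form a x == 0].

Lemma hyperplane_rowg a : hyperplane a = rowg (kermx a^T).
Proof.
apply/setP => x; rewrite inE mem_rowg; apply/eqP/sub_kermxP; rewrite mulmx_tr_lin_form.
  by move=> ->; rewrite raddf0.
by move/matrixP/(_ 0 0); rewrite !mxE eqxx mulr1n.
Qed.

Lemma card_hyperplane a : a != 0 -> #|hyperplane a| = (#|F| ^ k.-1)%N.
Proof.
by move=> a0; rewrite hyperplane_rowg card_rowg mxrank_ker mxrank_tr rank_rV a0 subn1.
Qed.

Lemma lin_formDr a x y : lin_form a (x + y) = lin_form a x + lin_form a y.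
Proof. by rewrite /lin_form -big_split; apply: eq_bigr => i _; rewrite mxE mulrDr. Qed.

Lemma lin_formZr a t x : lin_form a (t *: x) = t * lin_form a x.
Proof. by rewrite /lin_form mulr_sumr; apply: eq_bigr => i _; rewrite mxE mulrCA. Qed.

Lemma lin_formBr a x y : lin_form a (x - y) = lin_form a x - lin_form a y.
Proof. by rewrite lin_formDr -scaleN1r lin_formZr mulN1r. Qed.

Lemma lin_formDl a b x : lin_form (a + b) x = lin_form a x + lin_form b x.
Proof. by rewrite !(lin_formC _ x) lin_formDr. Qed.

Lemma lin_formZl t a x : lin_form (t *: a) x = t * lin_form a x.
Proof. by rewrite !(lin_formC _ x) lin_formZr. Qed.

Lemma lin_form_deltal (m : 'I_k) x : lin_form (delta_mx 0 m) x = x 0 m.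
Proof.
rewrite /lin_form (bigD1 m) //= big1 => [|i /negbTE im]; rewrite mxE eqxx /=.
  by rewrite eqxx mul1r addr0.
by rewrite im mul0r.
Qed.

Lemma lin_form_deltar a (m : 'I_k) : lin_form a (delta_mx 0 m) = a 0 m.
Proof. by rewrite lin_formC lin_form_deltal. Qed.

Lemma codewordE D a t : codeword D a 0 t = lin_form a (enum_val t).
Proof. by rewrite mxE (enum_val_nth 0). Qed.

Lemma wt_codewordE D a : wt (codeword D a) = #|D :\: hyperplane a|.
Proof.
rewrite /wt -(card_imset _ enum_val_inj); apply: eq_card => x.
rewrite [in RHS]inE; apply/imsetP/andP => [[t]|[xZ xD]].
  by rewrite inE codewordE => fx0 ->; split; [rewrite inE | apply: enum_valP].
by exists (enum_rank_in xD x); rewrite ?inE ?codewordE enum_rankK_in //; rewrite inE in xZ.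
Qed.

Lemma codeword_eq0 D a :
  (forall m, delta_mx 0 m \in D) -> (codeword D a == 0) = (a == 0).
Proof.
move=> deltaD; apply/eqP/eqP => [cw0|->].
  apply/rowP => m; move/rowP/(_ (enum_rank_in (deltaD m) (delta_mx 0 m))): cw0.
  by rewrite codewordE enum_rankK_in // lin_form_deltar !mxE.
by apply/rowP => t; rewrite codewordE !mxE /lin_form big1 // => i _; rewrite mxE mul0r.
Qed.

Lemma wt_codeword_hyperplane D a : 0 \notin D -> a != 0 ->
  (wt (codeword D a) + #|F| ^ k.-1 = #|D| + 1 + #|(hyperplane a :\ 0%R) :\: D|)%N.
Proof.
move=> D0 a0; rewrite wt_codewordE -(card_hyperplane a0).
have H0 : 0 \in hyperplane a.
  by rewrite inE lin_formC /lin_form big1 // => i _; rewrite mxE mul0r.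
rewrite (cardsD1 0 (hyperplane a)) H0.
rewrite -(cardsID D (hyperplane a :\ 0)) -(cardsID (hyperplane a) D).
suff -> : (hyperplane a :\ 0) :&: D = D :&: hyperplane a by lia.
by apply/setP => x; rewrite !inE andbC; case: eqP => // ->; rewrite (negbTE D0) andbF.
Qed.

Lemma wt_codeword_ge D a : 0 \notin D -> a != 0 ->
  #|D|%:Z - (#|F| ^ k.-1)%:Z + 1 <= (wt (codeword D a))%:Z.
Proof. by move=> D0 a0; have := wt_codeword_hyperplane D0 a0; lia. Qed.

Lemma wt_codeword_eq_min D a : 0 \notin D -> a != 0 ->
  (wt (codeword D a))%:Z = #|D|%:Z - (#|F| ^ k.-1)%:Z + 1 <->
  hyperplane a :\ 0 \subset D.
Proof.
move=> D0 a0; rewrite -setD_eq0 -cards_eq0.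
by have := wt_codeword_hyperplane D0 a0; split => [? | /eqP]; lia.
Qed.
End LinearForms.

Lemma exists_neq0_pm1 (F : finFieldType) :
  (3 < #|F|)%N -> exists s : F, [&& s != 0, s != 1 & s != -1].
Proof.
move=> F3; apply/existsP; apply: contraTT F3 => /existsPn none; rewrite -leqNgt.
apply: leq_trans (card_size [:: 0; 1; -1 : F]); apply/subset_leq_card/subsetP => s _.
by move: (none s); rewrite !inE; case: (s == 0); case: (s == 1); case: (s == -1).
Qed.

Lemma pchar_odd_two_neq0 (F : fieldType) (p : nat) :
  p \in [pchar F] -> odd p -> (2 : F) != 0.
Proof.
move=> pF op; rewrite -(dvdn_pcharf pF); apply/negP => /(@dvdn_leq p 2 isT).
by have := prime_gt1 (pcharf_prime pF); case: p op pF => [|[|[]]].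
Qed.

Section D2.
Variables (F : finFieldType) (k h : nat).
Implicit Types (x : 'rV[F]_k).

Definition pair_sums_neq0 x :=
  forall i j : 'I_k, (i < j)%N -> (j < h)%N -> x 0 i + x 0 j != 0.

Lemma pair_sums_neq0_notin_D2 x : pair_sums_neq0 x -> x \notin D2 F k h.
Proof.
move=> sx; rewrite inE negb_and orbC; apply/orP; left.
by apply/prodf_neq0 => i ih; apply/prodf_neq0 => j /andP[ij jh]; exact: sx.
Qed.

Lemma mem_D2 x (i j : 'I_k) : (i < j)%N -> (j < h)%N -> x != 0 ->
  x 0 i + x 0 j = 0 -> x \in D2 F k h.
Proof.
move=> ij jh x0 sx; rewrite inE x0; apply/prodf_eq0; exists i; first exact: ltn_trans jh.
by apply/prodf_eq0; exists j; rewrite ?ij ?jh ?sx.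
Qed.

Lemma zero_notin_D2 : 0 \notin D2 F k h.
Proof. by rewrite inE eqxx. Qed.

Lemma delta_mx_in_D2 (m : 'I_k) : (3 <= h)%N -> (h <= k)%N -> delta_mx 0 m \in D2 F k h.
Proof.
move=> h3 hk; have [i [j [ij jh im jm]]] : exists i j : 'I_k,
    [/\ (i < j)%N, (j < h)%N, i != m & j != m].
  have k0 : (0 < k)%N by lia.
  have k1 : (1 < k)%N by lia.
  have k2 : (2 < k)%N by lia.
  pose i0 : 'I_k := Ordinal k0; pose i1 : 'I_k := Ordinal k1; pose i2 : 'I_k := Ordinal k2.
  have [->|m0] := eqVneq m i0; first by exists i1, i2.
  have [->|m1] := eqVneq m i1; first by exists i0, i2.
  by exists i0, i1; rewrite /= (ltnW h3) !(eq_sym _ m) m0 m1.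
apply: (mem_D2 ij jh).
  by apply/eqP => /rowP/(_ m); rewrite !mxE !eqxx => /eqP; rewrite oner_eq0.
by rewrite !mxE (negbTE im) (negbTE jm) addr0.
Qed.

Lemma pair_sums_neq0_neq0 x : (1 < h)%N -> (h <= k)%N -> pair_sums_neq0 x -> x != 0.
Proof.
move=> h1 hk sx; have k1 : (1 < k)%N by lia.
by apply: contraTneq (sx (Ordinal (ltnW k1)) (Ordinal k1) isT h1) => ->; rewrite !mxE addr0 eqxx.
Qed.

Lemma e2_neq0 (i j : 'I_k) : i != j -> e2 F i j != 0.
Proof.
move=> ij; apply/eqP => /rowP/(_ i).
by rewrite !mxE !eqxx (negbTE ij) addr0 => /eqP; rewrite oner_eq0.
Qed.

Lemma hyperplane_e2_subset_D2 (lam : F) (i j : 'I_k) : lam != 0 -> (i < j)%N -> (j < h)%N ->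
  hyperplane (lam *: e2 F i j) :\ 0 \subset D2 F k h.
Proof.
move=> lam0 ij jh; apply/subsetP => x; rewrite in_setD1 [x \in _]inE.
rewrite lin_formZl lin_formDl !lin_form_deltal mulf_eq0 (negbTE lam0) /=.
by case/andP=> x0 /eqP; apply: mem_D2.
Qed.

Hypothesis two : (2 : F) != 0.

Lemma pair_sums_neq0_shift (m : 'I_k) (t : F) : (h <= m)%N || (t != -2) ->
  pair_sums_neq0 (const_mx 1 + t *: delta_mx 0 m).
Proof.
move=> hm i j ij jh; rewrite !mxE /=.
have t2 : (m < h)%N -> 1 + t + 1 != 0.
  move=> mh; rewrite (_ : _ + _ + _ = t - (-2)); last by ring.
  by rewrite subr_eq0; rewrite leqNgt mh in hm.
have [eim | im] := eqVneq i m.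
  have -> : (j == m) = false.
    by rewrite -eim; apply/negbTE; apply: contraTneq ij => ->; rewrite ltnn.
  by rewrite mulr1 mulr0 addr0 t2 // -eim (ltn_trans ij jh).
have [ejm | jm] := eqVneq j m.
  by rewrite mulr0 mulr1 addr0 (addrC 1 (1 + t)) t2 // -ejm.
by rewrite /= !mulr0 !addr0.
Qed.

Lemma pair_sums_neq0_three (u v w : 'I_k) (s : F) :
  u != v -> w != u -> w != v -> [&& s != 0, s != 1 & s != -1] ->
  pair_sums_neq0 (const_mx 1 + (s - 1) *: (delta_mx 0 u + delta_mx 0 v)
                    - (2 * s) *: delta_mx 0 w).
Proof.
move=> uv wu wv /and3P[s0 s1 sN1] i j ij jh.
set x := _ - _.
have xE l : x 0 l \in if l == w then [:: 1 - 2 * s] else [:: s; 1].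
  rewrite !mxE /=; have [lw | lw] := eqVneq l w.
    by rewrite lw (negbTE wu) (negbTE wv) mem_seq1 /=; apply/eqP; ring.
  have [lu | lu] := eqVneq l u.
    by rewrite lu (negbTE uv) inE /=; apply/orP; left; apply/eqP; ring.
  have [lv | lv] := eqVneq l v; rewrite !inE /=; apply/orP; [left | right]; apply/eqP; ring.
have sum_neq0 a b : a \in [:: s; 1] -> b \in [:: s; 1; 1 - 2 * s] -> a + b != 0.
  have s1' : 1 - s != 0 by rewrite subr_eq0 eq_sym.
  have sN1' : s + 1 != 0 by rewrite -[1]opprK subr_eq0.
  rewrite !inE => /orP[] /eqP-> /or3P[] /eqP->.
  - by rewrite (_ : s + s = 2 * s); [exact: mulf_neq0 | ring].
  - exact: sN1'.
  - by rewrite (_ : s + (1 - 2 * s) = 1 - s); last ring.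
  - by rewrite addrC.
  - exact: two.
  - by rewrite (_ : 1 + (1 - 2 * s) = 2 * (1 - s)); [exact: mulf_neq0 | ring].
have xE' l : x 0 l \in [:: s; 1; 1 - 2 * s].
  by move: (xE l); case: (l == w); rewrite !inE; [move=> -> | case/orP=> ->]; rewrite ?orbT.
have [iw | iw] := eqVneq i w.
  have jw : j != w by rewrite -iw; apply: contraTneq ij => ->; rewrite ltnn.
  by rewrite addrC sum_neq0 ?xE' //; move: (xE j); rewrite (negbTE jw).
by rewrite sum_neq0 ?xE' //; move: (xE i); rewrite (negbTE iw).
Qed.
End D2.

Section HyperplaneInD2.
Variables (F : finFieldType) (k h : nat) (a : 'rV[F]_k).
Hypotheses (two : (2 : F) != 0) (h1 : (1 < h)%N) (hk : (h <= k)%N).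
Hypothesis aD2 : hyperplane a :\ 0 \subset D2 F k h.

Lemma hyperplane_not_pair_sums_neq0 x : lin_form a x = 0 -> ~ pair_sums_neq0 h x.
Proof.
move=> ax0 sx; have x0 := pair_sums_neq0_neq0 h1 hk sx.
have /(subsetP aD2) : x \in hyperplane a :\ 0 by rewrite !inE x0 ax0 eqxx.
by apply/negP; exact: pair_sums_neq0_notin_D2.
Qed.

Let S := lin_form a (const_mx 1).

Lemma support_hyperplane_D2 (m : 'I_k) : a 0 m != 0 -> (m < h)%N /\ S = 2 * a 0 m.
Proof.
move=> am; set t := - (S / a 0 m).
have ax0 : lin_form a (const_mx 1 + t *: delta_mx 0 m) = 0.
  by rewrite lin_formDr lin_formZr lin_form_deltar /t mulNr divfK // subrr.
have := hyperplane_not_pair_sums_neq0 ax0.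
have [/(pair_sums_neq0_shift two) sx /(_ sx) // | ] := boolP ((h <= m)%N || (t != -2)).
rewrite negb_or -ltnNge negbK => /andP[mh /eqP/oppr_inj St] _; split=> //.
by rewrite -St divfK.
Qed.

Lemma support_hyperplane_D2_other (u : 'I_k) : a 0 u != 0 -> exists2 v, v != u & a 0 v != 0.
Proof.
move=> au; have [v /andP[vu av] | only_u] := pickP [pred v | (v != u) && (a 0 v != 0)].
  by exists v.
have Sa : S = a 0 u.
  rewrite /S /lin_form (bigD1 u) //= big1 ?mxE ?mulr1 ?addr0 // => v vu.
  by move/negbT: (only_u v); rewrite /= vu negbK => /eqP->; rewrite mul0r.
have [_ Su] := support_hyperplane_D2 au.
have : 2 * a 0 u - a 0 u = a 0 u by ring.
by rewrite -Su Sa subrr => /esym/eqP; rewrite (negbTE au).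
Qed.

Lemma support_hyperplane_D2_le2 (u v w : 'I_k) : (3 < #|F|)%N ->
  u != v -> w != u -> w != v -> a 0 u != 0 -> a 0 v != 0 -> a 0 w != 0 -> False.
Proof.
move=> F3 uv wu wv au av aw; have [s s_nt] := exists_neq0_pm1 F3.
have [_ Su] := support_hyperplane_D2 au; have [_ Sv] := support_hyperplane_D2 av.
have [_ Sw] := support_hyperplane_D2 aw.
apply: (@hyperplane_not_pair_sums_neq0
  (const_mx 1 + (s - 1) *: (delta_mx 0 u + delta_mx 0 v) - (2 * s) *: delta_mx 0 w)).
  rewrite lin_formBr lin_formDr !lin_formZr lin_formDr !lin_form_deltar -/S.
  rewrite (mulfI two (etrans (esym Sv) Su)) (mulfI two (etrans (esym Sw) Su)) Su; ring.
exact: pair_sums_neq0_three.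
Qed.

Lemma hyperplane_subset_D2_e2 : (3 < #|F|)%N -> a != 0 ->
  exists lam (i j : 'I_k), [/\ lam != 0, (i < j)%N, (j < h)%N & a = lam *: e2 F i j].
Proof.
move=> F3 a0; have /existsP[u au] : [exists u, a 0 u != 0].
  by apply: contraNT a0 => /existsPn a0; apply/eqP/rowP => l; rewrite mxE; apply/eqP/negPn/a0.
have [v vu av] := support_hyperplane_D2_other au.
have [uh Su] := support_hyperplane_D2 au; have [vh Sv] := support_hyperplane_D2 av.
have auv : a 0 v = a 0 u by apply: (mulfI two); rewrite -Su -Sv.
have a_e2 : a = a 0 u *: e2 F u v.
  apply/rowP => l; rewrite !mxE !eqxx /=.
  have [-> | lu] := eqVneq l u; first by rewrite eq_sym (negbTE vu) addr0 mulr1.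
  have [-> | lv] := eqVneq l v; first by rewrite add0r mulr1.
  rewrite addr0 mulr0; apply/eqP/negPn/negP => al.
  by apply: (support_hyperplane_D2_le2 F3 _ lu lv au av al); rewrite eq_sym.
have [uv | vu' | /val_inj uv] := ltngtP u v.
- by exists (a 0 u), u, v.
- by exists (a 0 u), v, u; rewrite /e2 addrC.
- by rewrite uv eqxx in vu.
Qed.
End HyperplaneInD2.

Theorem proposition3p2 (F : finFieldType) (p k h : nat) :
  prime p -> odd p -> p \in [pchar F] -> (5 < #|F|)%N ->
  (3 <= h)%N -> (h <= k)%N ->
  let D := D2 F k h in
  let n := #|D| in
  let d : int := (n%:Z - (#|F| ^ k.-1)%:Z + 1)%R in
  (* the value d is attained by a nonzero codeword *)
  (exists a : 'rV[F]_k, codeword D a != 0 /\ (wt (codeword D a))%:Z = d)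
  /\ (* every nonzero codeword has weight at least d *)
  (forall a : 'rV[F]_k, codeword D a != 0 -> d <= (wt (codeword D a))%:Z)
  /\ (* minimum weight codewords are exactly those of the hyperplanes x_i + x_j = 0 *)
  (forall a : 'rV[F]_k, codeword D a != 0 ->
     ((wt (codeword D a))%:Z = d <->
      exists (lam : F) (i j : 'I_k),
        [/\ lam != 0, (i < j)%N, (j < h)%N &
            codeword D a = codeword D (lam *: @e2 F k i j)])).
Proof.
move=> _ op pF F5 h3 hk D n d.
have two := pchar_odd_two_neq0 pF op.
have D0 : 0 \notin D := zero_notin_D2 F k h.
have cw0 a : (codeword D a == 0) = (a == 0).
  by apply: codeword_eq0 => m; exact: delta_mx_in_D2.
have e2_min lam (i j : 'I_k) : lam != 0 -> (i < j)%N -> (j < h)%N ->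
    (wt (codeword D (lam *: e2 F i j)))%:Z = d.
  move=> lam0 ij jh; apply/wt_codeword_eq_min; first exact: D0.
    by rewrite scaler_eq0 negb_or lam0 e2_neq0 // -val_eqE ltn_eqF.
  exact: hyperplane_e2_subset_D2.
split; [|split] => [|a|a]; rewrite ?cw0.
- have k1 : (1 < k)%N by lia.
  exists (1 *: e2 F (Ordinal (ltnW k1)) (Ordinal k1)).
  split; first by rewrite cw0 scale1r e2_neq0.
  by rewrite e2_min ?oner_neq0 //=; lia.
- exact: wt_codeword_ge D0.
- move=> a0; split => [/(wt_codeword_eq_min D0 a0) aD | [lam [i [j [lam0 ij jh ->]]]]].
    have h1 : (1 < h)%N by lia.
    have F3 : (3 < #|F|)%N by lia.
    have [lam [i [j [lam0 ij jh a_e2]]]] := hyperplane_subset_D2_e2 two h1 hk aD F3 a0.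
    by exists lam, i, j; rewrite a_e2.
  exact: e2_min.
Qed.
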